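(* Let $\mathcal F$ be a class of functions $\mathcal X\to[0,1]$, let $r^*=r^*(\mathcal G)$ be a localization radius of $\mathcal G=\{(f-g)^2:f,g\in\mathcal F\}$, let $S'\in(\mathcal X\times[0,1])^n$ be arbitrary, let $c\in\mathcal F$, and for $\bar\gamma>0$ let $\mathcal F_c(\bar\gamma)=\{f\in\mathcal F:d_{S'}(f,c)\le\bar\gamma\}$. Then for every $\bar\gamma\ge\sqrt{r^*}$, $$\hat{\mathfrak R}_n(\ell\circ\mathcal F_c(\bar\gamma),S')\le\bar\gamma\sqrt{r^*}+\frac{24}{\sqrt n}\int_0^{\bar\gamma}\sqrt{\log\mathcal N_2(\mathcal F,\rho,S')}\,d\rho.$$
   Context: $\mathcal Z=\mathcal X\times[0,1]$; for $S=\{(x_i,y_i)\}_{i\le n}$, $d_S(f,g)=(\frac1n\sum_i(f(x_i)-g(x_i))^2)^{1/2}$ and $\mathcal N_2(\mathcal F,\rho,S)$ is the minimal size of a $\rho$-cover of $\mathcal F$ in $d_S$. $\ell\circ\mathcal H=\{(x,y)\mapsto(f(x)-y)^2:f\in\mathcal H\}$. For a class $\mathcal G$ of real functions on $\mathcal Z$ and $S=\{z_1,\dots,z_n\}\in\mathcal Z^n$, $\hat{\mathfrak R}_n(\mathcal G,S)=\mathbb E_\sigma\sup_{g\in\mathcal G}\frac1n\sum_{i=1}^n\sigma_ig(z_i)$ with $\sigma_i$ i.i.d. uniform on $\{-1,1\}$; $\mathcal G[r,S]=\{g\in\mathcal G:\frac1n\sum_{i=1}^ng(z_i)\le r\}$.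 A localization radius $r^*(\mathcal G)$ is any number that is at least the largest solution of $\phi_n(r)=r$, for some function $\phi_n:[0,\infty)\to[0,\infty)$ that is nondecreasing, such that $\phi_n(r)/\sqrt r$ is nonincreasing on $(0,\infty)$, and such that $\sup_{S\in\mathcal Z^n}\hat{\mathfrak R}_n(\mathcal G[r,S],S)\le\phi_n(r)$ for all $r>0$. *)

From Stdlib Require Import Reals Lra Lia List ClassicalEpsilon.
Open Scope R_scope.

Fixpoint rsum (n : nat) (f : nat -> R) : R :=
  match n with O => 0 | S m => rsum m f + f m end.

(* Expectation over i.i.d. uniform Rademacher signs sigma_0..sigma_{n-1} *)
Fixpoint Esign (n : nat) (F : (nat -> R) -> R) : R :=
  match n with
  | O => F (fun _ => 0)
  | S m => (Esign m (fun s => F (fun i => if Nat.eqb i m then 1 else s i))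
          + Esign m (fun s => F (fun i => if Nat.eqb i m then -1 else s i))) / 2
  end.

(* least upper bound of a set of reals (meaningful when it exists) *)
Definition Rsup (E : R -> Prop) : R :=
  epsilon (inhabits 0) (fun m => is_lub E m).

(* samples in Z^n, Z = X x [0,1] *)
Definition sample_ok {X : Type} (n : nat) (S : nat -> X * R) : Prop :=
  forall i, (i < n)%nat -> 0 <= snd (S i) <= 1.

Definition emp_rad {X : Type} (n : nat) (G : (X * R -> R) -> Prop)
  (S : nat -> X * R) : R :=
  Esign n (fun sigma =>
    Rsup (fun v => exists g, G g /\ v = / INR n * rsum n (fun i => sigma i * g (S i)))).

Definition Gloc {X : Type} (n : nat) (G : (X * R -> R) -> Prop) (r : R)
  (S : nat -> X * R) : (X * R -> R) -> Prop :=
  fun g => G g /\ / INR n * rsum n (fun i => g (S i)) <= r.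

Definition is_loc_radius {X : Type} (n : nat) (G : (X * R -> R) -> Prop)
  (rstar : R) : Prop :=
  exists phi : R -> R,
    (forall r, 0 <= r -> 0 <= phi r) /\
    (forall a b, 0 <= a -> a <= b -> phi a <= phi b) /\
    (forall a b, 0 < a -> a <= b -> phi b / sqrt b <= phi a / sqrt a) /\
    (forall r S, 0 < r -> sample_ok n S -> emp_rad n (Gloc n G r S) S <= phi r) /\
    (exists r0, 0 <= r0 /\ phi r0 = r0 /\
       (forall r, 0 <= r -> phi r = r -> r <= r0) /\ r0 <= rstar).

Definition dS {X : Type} (n : nat) (S : nat -> X * R) (f g : X -> R) : R :=
  sqrt (/ INR n * rsum n (fun i => (f (fst (S i)) - g (fst (S i))) ^ 2)).

Definition is_cover {X : Type} (n : nat) (F : (X -> R) -> Prop) (rho : R)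
  (S : nat -> X * R) (C : list (X -> R)) : Prop :=
  (forall c, In c C -> F c) /\
  (forall f, F f -> exists c, In c C /\ dS n S f c <= rho).

Definition is_cov_num {X : Type} (n : nat) (F : (X -> R) -> Prop) (rho : R)
  (S : nat -> X * R) (N : nat) : Prop :=
  (exists C, is_cover n F rho S C /\ length C = N) /\
  (forall C, is_cover n F rho S C -> (N <= length C)%nat).

Definition N2 {X : Type} (n : nat) (F : (X -> R) -> Prop) (rho : R)
  (S : nat -> X * R) : nat :=
  epsilon (inhabits 0%nat) (is_cov_num n F rho S).

Definition improper_int0 (h : R -> R) (b l : R) : Prop :=
  forall eps, 0 < eps -> exists delta, 0 < delta /\
    forall e, 0 < e < delta -> e <= b ->
      exists pr : Riemann_integrable h e b, Rabs (RiemannInt pr - l) < eps.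

Definition loss_class {X : Type} (H : (X -> R) -> Prop) : (X * R -> R) -> Prop :=
  fun g => exists f, H f /\ g = (fun z => (f (fst z) - snd z) ^ 2).

Definition sqdiff_class {X : Type} (F : (X -> R) -> Prop) : (X * R -> R) -> Prop :=
  fun g => exists f1 f2, F f1 /\ F f2 /\ g = (fun z => (f1 (fst z) - f2 (fst z)) ^ 2).

(* The empirical Rademacher complexity of l o F_c(gam) is bounded by chaining.
   Fix minimal covers C_k of F at the dyadic scales gam/2^k (C_0 = {c}).  Every
   f in F_c(gam) is approximated by links g_k in C_k with d(f,g_k) <= gam/2^k,
   and the loss average of f telescopes into the value at c, a finite sum of
   increments between consecutive links, and a remainder at most 2 gam/2^K.
   At level k the increments range over at most N_k^2 vectors, each of squared
   norm at most 4(3 gam/2^k)^2/n (the square loss is 2-Lipschitz on [0,1]), so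
   Massart's finite-class lemma bounds the expected maximal increment by
   12 (gam/2^k) sqrt(ln N_k)/sqrt n; these sum to twice a lower Riemann sum of
   the entropy integral, hence to at most 24/sqrt n * I.  Letting K -> oo gives
   the full Dudley bound 24/sqrt n * I. *)

From Stdlib Require Import Reals Lra Lia List ZArith Wf_nat ClassicalEpsilon Classical.
From Coquelicot Require Import Coquelicot.
Open Scope R_scope.

Lemma exp_le_mono a b : a <= b -> exp a <= exp b.
Proof. intros [H|H]; [left; apply exp_increasing; auto|subst; lra]. Qed.

(* sinh x <= x cosh x on [0, oo): the difference vanishes at 0 and has
   derivative x sinh x >= 0. *)
Lemma sinh_le_x_cosh x : 0 <= x -> (exp x - exp (-x)) / 2 <= x * (exp x + exp (-x)) / 2.
Proof.
  intros Hx. destruct (Req_dec x 0) as [->|Hx0].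
  { rewrite Ropp_0, exp_0; lra. }
  set (w := fun t => t * (exp t + exp (-t)) / 2 - (exp t - exp (-t)) / 2).
  destruct (MVT_cor2 w (fun t => t * (exp t - exp (-t)) / 2) 0 x) as [t [Hw Ht]]; [lra| |].
  { intros t _. apply is_derive_Reals. unfold w. auto_derive; auto. field. }
  unfold w in Hw. rewrite Ropp_0, exp_0 in Hw.
  assert (exp (-t) <= exp t) by (apply exp_le_mono; lra).
  assert (0 <= t * (exp t - exp (-t)) / 2 * (x - 0)).
  { apply Rmult_le_pos; [|lra]. unfold Rdiv. apply Rmult_le_pos; [apply Rmult_le_pos|]; lra. }
  lra.
Qed.

(* cosh x <= exp (x^2/2) on [0, oo): cosh t * exp (-t^2/2) equals 1 at 0 and is
   nonincreasing by [sinh_le_x_cosh]. *)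
Lemma cosh_le_exp_sq_nonneg x : 0 <= x -> (exp x + exp (-x)) / 2 <= exp (x ^ 2 / 2).
Proof.
  intros Hx. destruct (Req_dec x 0) as [->|Hx0].
  { rewrite Ropp_0, exp_0. replace (0 ^ 2 / 2) with 0 by field. rewrite exp_0; lra. }
  set (u := fun t => (exp t + exp (-t)) / 2 * exp (-(t ^ 2 / 2))).
  destruct (MVT_cor2 u (fun t => - (t * (exp t + exp (-t)) / 2 - (exp t - exp (-t)) / 2)
                                  * exp (-(t ^ 2 / 2))) 0 x) as [t [Hu Ht]]; [lra| |].
  { intros t _. apply is_derive_Reals. unfold u. auto_derive; auto.
    replace (t * (t * 1) * / 2) with (t ^ 2 / 2) by field. field. }
  unfold u in Hu. rewrite Ropp_0, exp_0 in Hu.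
  replace (-(0 ^ 2 / 2)) with 0 in Hu by field. rewrite exp_0 in Hu.
  assert (0 <= (t * (exp t + exp (-t)) / 2 - (exp t - exp (-t)) / 2) * exp (-(t ^ 2 / 2)) * (x - 0)).
  { apply Rmult_le_pos; [|lra]. apply Rmult_le_pos; [|left; apply exp_pos].
    pose proof (sinh_le_x_cosh t ltac:(lra)). lra. }
  assert (Hinv : exp (x ^ 2 / 2) * exp (-(x ^ 2 / 2)) = 1).
  { rewrite <- exp_plus, Rplus_opp_r. apply exp_0. }
  pose proof (exp_pos (-(x ^ 2 / 2))).
  apply Rmult_le_reg_r with (exp (-(x ^ 2 / 2))); auto. lra.
Qed.

(* The sub-Gaussian bound for a single Rademacher sign: E exp(x sigma) <= exp(x^2/2). *)
Lemma cosh_le_exp_sq x : (exp x + exp (-x)) / 2 <= exp (x ^ 2 / 2).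
Proof.
  destruct (Rle_dec 0 x); [apply cosh_le_exp_sq_nonneg; auto|].
  replace (x ^ 2) with ((-x) ^ 2) by ring.
  replace (exp x + exp (-x)) with (exp (-x) + exp (- - x)) by (rewrite Ropp_involutive; ring).
  apply cosh_le_exp_sq_nonneg. lra.
Qed.

(* Midpoint convexity of exp, the one-sign case of Jensen's inequality. *)
Lemma exp_midpoint a b : exp ((a + b) / 2) <= (exp a + exp b) / 2.
Proof.
  set (p := exp (a / 2)). set (q := exp (b / 2)).
  assert (Ea : exp a = p * p) by (unfold p; rewrite <- exp_plus; f_equal; field).
  assert (Eb : exp b = q * q) by (unfold q; rewrite <- exp_plus; f_equal; field).
  assert (Eab : exp ((a + b) / 2) = p * q) by (unfold p, q; rewrite <- exp_plus; f_equal; field).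
  rewrite Ea, Eb, Eab. pose proof (Rle_0_sqr (p - q)). unfold Rsqr in *. lra.
Qed.

(* Optimizing a free parameter: if x <= a*lam + b/lam for every lam > 0, then
   x <= 2 sqrt(ab) (the value at lam = sqrt(b/a)). *)
Lemma le_of_forall_lambda x a b : 0 <= a -> 0 <= b ->
  (forall lam, 0 < lam -> x <= a * lam + b / lam) -> x <= 2 * sqrt (a * b).
Proof.
  intros Ha Hb H.
  destruct (Req_dec (a * b) 0) as [Hab|Hab].
  - rewrite Hab, sqrt_0. destruct (Rle_dec x 0) as [|Hx]; [lra|exfalso].
    destruct (Rmult_integral _ _ Hab) as [->| ->].
    + destruct (Req_dec b 0) as [->|Hb0].
      * specialize (H 1 Rlt_0_1). lra.
      * assert (Hl : 0 < 2 * b / x) by (apply Rdiv_lt_0_compat; lra).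
        specialize (H _ Hl). replace (0 * (2 * b / x) + b / (2 * b / x)) with (x / 2) in H
          by (field; lra). lra.
    + destruct (Req_dec a 0) as [->|Ha0].
      * specialize (H 1 Rlt_0_1). lra.
      * assert (Hl : 0 < x / (2 * a)) by (apply Rdiv_lt_0_compat; lra).
        specialize (H _ Hl). replace (a * (x / (2 * a)) + 0 / (x / (2 * a))) with (x / 2) in H
          by (field; lra). lra.
  - assert (Ha0 : a <> 0) by (intros ->; apply Hab; ring).
    set (s := sqrt (a * b)).
    assert (Hs : 0 < s) by (apply sqrt_lt_R0; destruct Ha, Hb; nra).
    assert (Hs2 : s * s = a * b) by (apply sqrt_sqrt; nra).
    assert (Hl : 0 < s / a) by (apply Rdiv_lt_0_compat; lra).
    specialize (H _ Hl). replace (a * (s / a) + b / (s / a)) with (s + a * b / s) in H by (field; lra).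
    rewrite <- Hs2 in H. replace (s * s / s) with s in H by (field; lra). lra.
Qed.

Lemma rsum_ext n f g : (forall i, (i < n)%nat -> f i = g i) -> rsum n f = rsum n g.
Proof. induction n as [|m IH]; intros H; simpl; auto. rewrite IH, H; auto. Qed.

Lemma rsum_plus n f g : rsum n (fun i => f i + g i) = rsum n f + rsum n g.
Proof. induction n as [|m IH]; simpl; [lra|]. rewrite IH. lra. Qed.

Lemma rsum_scal n c f : rsum n (fun i => c * f i) = c * rsum n f.
Proof. induction n as [|m IH]; simpl; [lra|]. rewrite IH. lra. Qed.

Lemma rsum_le n f g : (forall i, (i < n)%nat -> f i <= g i) -> rsum n f <= rsum n g.
Proof.
  induction n as [|m IH]; intros H; simpl; [lra|].
  assert (rsum m f <= rsum m g) by (apply IH; intros; apply H; lia).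
  assert (f m <= g m) by (apply H; lia). lra.
Qed.

Lemma rsum_const n c : rsum n (fun _ => c) = INR n * c.
Proof. induction n as [|m IH]; simpl rsum; [simpl; lra|]. rewrite IH, S_INR. lra. Qed.

Lemma rsum_nonneg n f : (forall i, (i < n)%nat -> 0 <= f i) -> 0 <= rsum n f.
Proof. intros H. rewrite <- (Rmult_0_r (INR n)), <- rsum_const. apply rsum_le. auto. Qed.

Lemma rsum_sq_nonneg n f : 0 <= rsum n (fun i => f i ^ 2).
Proof. apply rsum_nonneg. intros. apply pow2_ge_0. Qed.

(* Cauchy-Schwarz, via 2ab <= t a^2 + b^2/t and [le_of_forall_lambda]. *)
Lemma rsum_cauchy_schwarz n a b : rsum n (fun i => a i * b i) <=
  sqrt (rsum n (fun i => a i ^ 2)) * sqrt (rsum n (fun i => b i ^ 2)).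
Proof.
  set (A := rsum n (fun i => a i ^ 2)). set (B := rsum n (fun i => b i ^ 2)).
  assert (HA : 0 <= A) by apply rsum_sq_nonneg. assert (HB : 0 <= B) by apply rsum_sq_nonneg.
  rewrite <- sqrt_mult_alt by auto.
  replace (sqrt (A * B)) with (2 * sqrt (A / 2 * (B / 2))).
  2:{ replace (A * B) with ((2 * 2) * (A / 2 * (B / 2))) by field.
      rewrite (sqrt_mult_alt (2 * 2)), sqrt_square by lra. auto. }
  apply le_of_forall_lambda; try lra. intros t Ht.
  replace (A / 2 * t + B / 2 / t) with (rsum n (fun i => t / 2 * a i ^ 2 + / (2 * t) * b i ^ 2))
    by (rewrite rsum_plus, !rsum_scal; unfold A, B; field; lra).
  apply rsum_le. intros i _.
  assert (0 <= (t * a i - b i) ^ 2 / (2 * t))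
    by (apply Rmult_le_pos; [apply pow2_ge_0|left; apply Rinv_0_lt_compat; lra]).
  replace (t / 2 * a i ^ 2 + / (2 * t) * b i ^ 2)
    with (a i * b i + (t * a i - b i) ^ 2 / (2 * t)) by (field; lra).
  lra.
Qed.

Lemma rsum_minkowski n a b : sqrt (rsum n (fun i => (a i + b i) ^ 2)) <=
  sqrt (rsum n (fun i => a i ^ 2)) + sqrt (rsum n (fun i => b i ^ 2)).
Proof.
  set (A := rsum n (fun i => a i ^ 2)). set (B := rsum n (fun i => b i ^ 2)).
  assert (HA : 0 <= A) by apply rsum_sq_nonneg. assert (HB : 0 <= B) by apply rsum_sq_nonneg.
  pose proof (sqrt_pos A). pose proof (sqrt_pos B).
  rewrite <- (sqrt_square (sqrt A + sqrt B)) by lra.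
  apply sqrt_le_1; [apply rsum_sq_nonneg|apply Rmult_le_pos; lra|].
  replace (rsum n (fun i => (a i + b i) ^ 2)) with (A + B + 2 * rsum n (fun i => a i * b i)).
  2:{ unfold A, B. rewrite <- rsum_scal, <- !rsum_plus. apply rsum_ext. intros; ring. }
  pose proof (rsum_cauchy_schwarz n a b) as Hcs. fold A B in Hcs.
  replace ((sqrt A + sqrt B) * (sqrt A + sqrt B))
    with (sqrt A * sqrt A + sqrt B * sqrt B + 2 * (sqrt A * sqrt B)) by ring.
  rewrite !sqrt_sqrt by auto. lra.
Qed.

(* [s] is a sign vector on the first [n] coordinates; [Esign n] only ever
   evaluates its argument on such vectors. *)
Definition signs (n : nat) (s : nat -> R) : Prop :=
  forall i, (i < n)%nat -> s i = 1 \/ s i = -1.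

Lemma signs_update m s v : signs m s -> (v = 1 \/ v = -1) ->
  signs (S m) (fun i => if Nat.eqb i m then v else s i).
Proof. intros Hs Hv i Hi. destruct (Nat.eqb_spec i m); auto. apply Hs; lia. Qed.

Lemma Esign_mono n : forall F G, (forall s, signs n s -> F s <= G s) -> Esign n F <= Esign n G.
Proof.
  induction n as [|m IH]; intros F G H; simpl.
  - apply H. intros i Hi; lia.
  - assert (Esign m (fun s => F (fun i => if Nat.eqb i m then 1 else s i)) <=
            Esign m (fun s => G (fun i => if Nat.eqb i m then 1 else s i)))
      by (apply IH; intros s Hs; apply H, signs_update; auto).
    assert (Esign m (fun s => F (fun i => if Nat.eqb i m then -1 else s i)) <=
            Esign m (fun s => G (fun i => if Nat.eqb i m then -1 else s i)))
      by (apply IH; intros s Hs; apply H, signs_update; auto).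
    lra.
Qed.

Lemma Esign_ext n F G : (forall s, signs n s -> F s = G s) -> Esign n F = Esign n G.
Proof. intros H. apply Rle_antisym; apply Esign_mono; intros s Hs; rewrite H; auto; lra. Qed.

Lemma Esign_const n : forall c, Esign n (fun _ => c) = c.
Proof. induction n as [|m IH]; intros c; simpl; auto. rewrite !IH. lra. Qed.

Lemma Esign_plus n : forall F G, Esign n (fun s => F s + G s) = Esign n F + Esign n G.
Proof.
  induction n as [|m IH]; intros F G; simpl; auto.
  rewrite (IH (fun s => F _) (fun s => G _)), (IH (fun s => F _) (fun s => G _)). lra.
Qed.

Lemma Esign_scal n : forall c F, Esign n (fun s => c * F s) = c * Esign n F.
Proof.
  induction n as [|m IH]; intros c F; simpl; auto.
  rewrite (IH c (fun s => F _)), (IH c (fun s => F _)). lra.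
Qed.

Lemma Esign_rsum n K : forall T : nat -> (nat -> R) -> R,
  Esign n (fun s => rsum K (fun k => T k s)) = rsum K (fun k => Esign n (T k)).
Proof.
  induction K as [|K IH]; intros T; simpl; [apply Esign_const|]. rewrite Esign_plus, IH. auto.
Qed.

Lemma Esign_sign n : forall j, (j < n)%nat -> Esign n (fun s => s j) = 0.
Proof.
  induction n as [|m IH]; intros j Hj; [lia|]. simpl.
  destruct (Nat.eqb_spec j m).
  - rewrite !Esign_const. lra.
  - rewrite (IH j) by lia. lra.
Qed.

Lemma Esign_linear n a : Esign n (fun s => rsum n (fun i => s i * a i)) = 0.
Proof.
  rewrite (Esign_rsum n n (fun i s => s i * a i)).
  rewrite (rsum_ext n _ (fun _ => 0)), rsum_const; [lra|].
  intros i Hi. rewrite (Esign_ext n _ (fun s => a i * s i)) by (intros; ring).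
  rewrite Esign_scal, Esign_sign by auto. ring.
Qed.

Lemma Esign_jensen n : forall F, exp (Esign n F) <= Esign n (fun s => exp (F s)).
Proof.
  induction n as [|m IH]; intros F; simpl; [lra|].
  eapply Rle_trans; [apply exp_midpoint|].
  pose proof (IH (fun s => F (fun i => if Nat.eqb i m then 1 else s i))).
  pose proof (IH (fun s => F (fun i => if Nat.eqb i m then -1 else s i))).
  simpl in *. lra.
Qed.

Lemma Esign_mgf m : forall w, Esign m (fun s => exp (rsum m (fun i => s i * w i)))
   <= exp (rsum m (fun i => w i ^ 2) / 2).
Proof.
  induction m as [|m IH]; intros w; cbn [Esign rsum].
  - replace (0 / 2) with 0 by field. lra.
  - set (E := Esign m (fun s => exp (rsum m (fun i => s i * w i)))).
    assert (Hsplit : forall v, Esign m (fun s =>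
        exp (rsum m (fun i => (if Nat.eqb i m then v else s i) * w i)
             + (if Nat.eqb m m then v else s m) * w m)) = exp (v * w m) * E).
    { intros v. unfold E. rewrite <- Esign_scal. apply Esign_ext. intros s _.
      rewrite <- exp_plus, Nat.eqb_refl, Rplus_comm. do 2 f_equal.
      apply rsum_ext. intros i Hi. destruct (Nat.eqb_spec i m); [lia|auto]. }
    rewrite !Hsplit. replace (1 * w m) with (w m) by ring. replace (-1 * w m) with (- w m) by ring.
    replace ((rsum m (fun i => w i ^ 2) + w m ^ 2) / 2)
      with (rsum m (fun i => w i ^ 2) / 2 + w m ^ 2 / 2) by field.
    rewrite exp_plus.
    assert (HE : 0 <= E) by (rewrite <- (Esign_const m 0); apply Esign_mono; intros; left; apply exp_pos).
    pose proof (IH w). pose proof (cosh_le_exp_sq (w m)). fold E in H.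
    replace ((exp (w m) * E + exp (- w m) * E) / 2) with ((exp (w m) + exp (- w m)) / 2 * E) by field.
    rewrite (Rmult_comm (exp _)). apply Rmult_le_compat; auto.
    left. apply Rdiv_lt_0_compat; [apply Rplus_lt_0_compat; apply exp_pos|lra].
Qed.

(* ** Massart's finite-class lemma *)

Definition lmax (l : list R) : R :=
  match l with nil => 0 | a :: l' => fold_right Rmax a l' end.

Definition lsum (l : list R) : R := fold_right Rplus 0 l.

Lemma lmax_ge l a : In a l -> a <= lmax l.
Proof.
  assert (Hge : forall b l a, In a (b :: l) -> a <= fold_right Rmax b l).
  { intros b l0. induction l0 as [|c l0 IH]; simpl; intros a0 Ha.
    - destruct Ha as [->|[]]; lra.
    - destruct Ha as [->|[->|Ha]].
      + eapply Rle_trans; [apply IH; left; auto|apply Rmax_r].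
      + apply Rmax_l.
      + eapply Rle_trans; [apply IH; right; auto|apply Rmax_r]. }
  destruct l as [|b l]; simpl; [tauto|]. apply Hge.
Qed.

Lemma lmax_in l : l <> nil -> In (lmax l) l.
Proof.
  assert (Hin : forall b l, In (fold_right Rmax b l) (b :: l)).
  { intros b l0. induction l0 as [|c l0 IH]; simpl; [auto|].
    apply Rmax_case_strong; intros _; [right; left; auto|].
    destruct IH as [E|E]; [left; auto|right; right; auto]. }
  destruct l as [|b l]; [congruence|]. intros _. apply Hin.
Qed.

Lemma lsum_ge_elem l a : (forall x, In x l -> 0 <= x) -> In a l -> a <= lsum l.
Proof.
  induction l as [|b l IH]; simpl; intros Hpos Ha; [tauto|].
  assert (0 <= b) by (apply Hpos; auto). assert (0 <= lsum l).
  { clear -Hpos. induction l as [|x l IHl]; simpl; [lra|].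
    assert (0 <= x) by (apply Hpos; right; left; auto).
    assert (0 <= lsum l) by (apply IHl; intros y Hy; apply Hpos; simpl in *; tauto). lra. }
  destruct Ha as [->|Ha]; [lra|].
  assert (a <= lsum l) by (apply IH; auto). lra.
Qed.

Lemma lsum_map_le {A} (f : A -> R) l B : (forall x, In x l -> f x <= B) ->
  lsum (map f l) <= INR (length l) * B.
Proof.
  induction l as [|x l IH]; intros H; [simpl; lra|].
  assert (f x <= B) by (apply H; left; auto).
  assert (lsum (map f l) <= INR (length l) * B) by (apply IH; intros y Hy; apply H; right; auto).
  cbn [map length]. unfold lsum at 1. cbn [fold_right]. fold (lsum (map f l)). rewrite S_INR. lra.
Qed.

Lemma Esign_lsum {A} n (W : list A) (G : A -> (nat -> R) -> R) :
  Esign n (fun s => lsum (map (fun w => G w s) W)) = lsum (map (fun w => Esign n (G w)) W).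
Proof. induction W as [|w W IH]; simpl; [apply Esign_const|]. rewrite Esign_plus, IH. auto. Qed.

Lemma massart_mgf n (W : list (nat -> R)) Q lam : W <> nil -> 0 <= lam ->
  (forall w, In w W -> rsum n (fun i => w i ^ 2) <= Q) ->
  exp (lam * Esign n (fun s => lmax (map (fun w => rsum n (fun i => s i * w i)) W)))
    <= INR (length W) * exp (lam ^ 2 * Q / 2).
Proof.
  intros HW Hlam HQ. rewrite <- Esign_scal. eapply Rle_trans; [apply Esign_jensen|].
  eapply Rle_trans with
    (Esign n (fun s => lsum (map (fun w => exp (rsum n (fun i => s i * (lam * w i)))) W))).
  - apply Esign_mono. intros s _.
    set (l := map (fun w => rsum n (fun i => s i * w i)) W).
    assert (Hl : l <> nil) by (unfold l; intros E; apply HW, (map_eq_nil _ _ E)).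
    replace (map (fun w => exp (rsum n (fun i => s i * (lam * w i)))) W)
      with (map (fun b => exp (lam * b)) l).
    2:{ unfold l. rewrite map_map. apply map_ext. intros w. f_equal.
        rewrite <- rsum_scal. apply rsum_ext. intros; ring. }
    apply lsum_ge_elem; [intros x Hx; apply in_map_iff in Hx; destruct Hx as [b [<- _]]; left; apply exp_pos|].
    apply (in_map (fun b => exp (lam * b))), lmax_in, Hl.
  - rewrite (Esign_lsum n W (fun w s => exp (rsum n (fun i => s i * (lam * w i))))).
    apply lsum_map_le. intros w Hw. eapply Rle_trans; [apply Esign_mgf|]. apply exp_le_mono.
    rewrite (rsum_ext n _ (fun i => lam ^ 2 * w i ^ 2)) by (intros; ring). rewrite rsum_scal.
    pose proof (HQ w Hw). pose proof (pow2_ge_0 lam). unfold Rdiv. apply Rmult_le_compat_r; [lra|].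
    apply Rmult_le_compat_l; auto.
Qed.

Lemma massart n (W : list (nat -> R)) Q : W <> nil -> 0 <= Q ->
  (forall w, In w W -> rsum n (fun i => w i ^ 2) <= Q) ->
  Esign n (fun s => lmax (map (fun w => rsum n (fun i => s i * w i)) W))
    <= sqrt (2 * Q * ln (INR (length W))).
Proof.
  intros HW HQ HWQ.
  set (E := Esign n _). set (N := INR (length W)).
  assert (HN : 1 <= N).
  { unfold N. destruct W as [|w W]; [congruence|]. simpl length. rewrite S_INR.
    pose proof (pos_INR (length W)). lra. }
  assert (Hln : 0 <= ln N) by (rewrite <- ln_1; apply ln_le; lra).
  replace (sqrt (2 * Q * ln N)) with (2 * sqrt (Q / 2 * ln N)).
  2:{ replace (2 * Q * ln N) with ((2 * 2) * (Q / 2 * ln N)) by field.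
      rewrite (sqrt_mult_alt (2 * 2)), sqrt_square by lra. auto. }
  apply le_of_forall_lambda; [lra|auto|]. intros lam Hlam.
  pose proof (massart_mgf n W Q lam HW ltac:(lra) HWQ) as Hmgf. fold E N in Hmgf.
  assert (Hlog : lam * E <= ln N + lam ^ 2 * Q / 2).
  { rewrite <- (ln_exp (lam * E)), <- (ln_exp (lam ^ 2 * Q / 2)), <- ln_mult by (try apply exp_pos; lra).
    apply ln_le; auto. apply exp_pos. }
  apply Rmult_le_reg_l with lam; auto.
  replace (lam * (Q / 2 * lam + ln N / lam)) with (ln N + lam ^ 2 * Q / 2) by (field; lra). auto.
Qed.

Lemma dS_sym {X} n (S : nat -> X * R) f g : dS n S f g = dS n S g f.
Proof. unfold dS. do 2 f_equal. apply rsum_ext. intros; ring. Qed.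

Lemma dS_refl {X} n (S : nat -> X * R) f : dS n S f f = 0.
Proof.
  unfold dS. rewrite (rsum_ext n _ (fun _ => 0)) by (intros; ring).
  rewrite rsum_const, !Rmult_0_r. apply sqrt_0.
Qed.

Lemma dS_triangle {X} n (S : nat -> X * R) f g h : (0 < n)%nat ->
  dS n S f h <= dS n S f g + dS n S g h.
Proof.
  intros Hn. unfold dS. assert (0 < / INR n) by (apply Rinv_0_lt_compat, lt_0_INR; auto).
  rewrite !sqrt_mult_alt by lra. rewrite <- Rmult_plus_distr_l.
  apply Rmult_le_compat_l; [apply sqrt_pos|].
  rewrite (rsum_ext n (fun i => _ ^ 2) (fun i => ((f (fst (S i)) - g (fst (S i)))
                                               + (g (fst (S i)) - h (fst (S i)))) ^ 2)) by (intros; ring).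
  apply (rsum_minkowski n (fun i => f (fst (S i)) - g (fst (S i))) (fun i => g (fst (S i)) - h (fst (S i)))).
Qed.

Lemma dS_le_sum_sq {X} n (S : nat -> X * R) f g r : (0 < n)%nat -> dS n S f g <= r ->
  rsum n (fun i => (f (fst (S i)) - g (fst (S i))) ^ 2) <= INR n * r ^ 2.
Proof.
  intros Hn H. unfold dS in H. assert (HnR : 0 < INR n) by (apply lt_0_INR; auto).
  set (Q := rsum n _) in *.
  assert (HQ : 0 <= / INR n * Q)
    by (apply Rmult_le_pos; [left; apply Rinv_0_lt_compat; lra|apply rsum_sq_nonneg]).
  pose proof (sqrt_pos (/ INR n * Q)).
  assert (/ INR n * Q <= r ^ 2).
  { rewrite <- (sqrt_sqrt (/ INR n * Q)) by auto. simpl. rewrite Rmult_1_r. apply Rmult_le_compat; lra. }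
  apply Rmult_le_reg_l with (/ INR n); [apply Rinv_0_lt_compat; lra|].
  rewrite <- Rmult_assoc, Rinv_l, Rmult_1_l by lra. auto.
Qed.

Lemma dS_le_of_pointwise {X} n (S : nat -> X * R) f g rho : (0 < n)%nat -> 0 < rho ->
  (forall i, (i < n)%nat -> Rabs (f (fst (S i)) - g (fst (S i))) < rho) -> dS n S f g <= rho.
Proof.
  intros Hn Hr Hpt. assert (HnR : 0 < INR n) by (apply lt_0_INR; auto).
  unfold dS. rewrite <- (sqrt_square rho) by lra. apply sqrt_le_1.
  { apply Rmult_le_pos; [left; apply Rinv_0_lt_compat; auto|apply rsum_sq_nonneg]. }
  { apply Rmult_le_pos; lra. }
  apply Rmult_le_reg_l with (INR n); auto. rewrite <- Rmult_assoc, Rinv_r, Rmult_1_l by lra.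
  rewrite <- rsum_const. apply rsum_le. intros i Hi. specialize (Hpt i Hi).
  apply Rabs_def2 in Hpt. nra.
Qed.

(* A class on which a function [key] takes finitely many values, members with
   equal keys being rho-close, has a finite rho-cover: one representative per key. *)
Lemma cover_of_finite_keys {X K : Type} n (F : (X -> R) -> Prop) (S : nat -> X * R) rho
  (key : (X -> R) -> K) (L : list K) (f0 : X -> R) :
  F f0 -> (forall f, F f -> In (key f) L) ->
  (forall f g, F f -> F g -> key f = key g -> dS n S f g <= rho) ->
  exists C, is_cover n F rho S C.
Proof.
  intros Hf0 HL Hclose.
  set (rep := fun l => epsilon (inhabits f0)
                 (fun g => F g /\ (key g = l \/ ~ (exists f, F f /\ key f = l)))).
  assert (Hrep : forall l, F (rep l) /\ (key (rep l) = l \/ ~ (exists f, F f /\ key f = l))).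
  { intros l. unfold rep. apply epsilon_spec.
    destruct (classic (exists f, F f /\ key f = l)) as [[f [Hf Hk]]|Hno]; [exists f|exists f0]; auto. }
  exists (map rep L). split.
  - intros g Hg. apply in_map_iff in Hg. destruct Hg as [l [<- _]]. apply Hrep.
  - intros f Hf. exists (rep (key f)). split; [apply in_map, HL, Hf|].
    destruct (Hrep (key f)) as [Hg [Hk|Hno]]; [|exfalso; apply Hno; eauto].
    apply Hclose; auto.
Qed.

Fixpoint bounded_lists (m M : nat) : list (list nat) :=
  match m with
  | O => nil :: nil
  | S m' => flat_map (fun j => map (cons j) (bounded_lists m' M)) (seq 0 (S M))
  end.

Lemma in_bounded_lists m M l : length l = m -> (forall j, In j l -> (j <= M)%nat) ->
  In l (bounded_lists m M).
Proof.
  intros <-. induction l as [|j l IH]; intros H; [simpl; auto|]. cbn [length bounded_lists].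
  apply in_flat_map. exists j. split.
  - apply in_seq. assert (j <= M)%nat by (apply H; left; auto). lia.
  - apply in_map, IH. intros; apply H; right; auto.
Qed.

Definition cell (rho a : R) : nat := Z.to_nat (up (a / rho)).

Lemma up_nonneg r : 0 <= r -> (0 <= up r)%Z.
Proof. intros H. destruct (archimed r). apply Z.lt_le_incl, lt_IZR. simpl. lra. Qed.

Lemma cell_le rho a b : 0 < rho -> 0 <= a <= b -> (cell rho a <= cell rho b)%nat.
Proof.
  intros Hr Hab. assert (Hinv : 0 < / rho) by (apply Rinv_0_lt_compat; auto).
  unfold cell, Rdiv. apply Z2Nat.inj_le; try (apply up_nonneg; apply Rmult_le_pos; lra).
  assert (Hab' : a * / rho <= b * / rho) by (apply Rmult_le_compat_r; lra).
  destruct (archimed (a * / rho)), (archimed (b * / rho)).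
  assert (up (a * / rho) < up (b * / rho) + 1)%Z by (apply lt_IZR; rewrite plus_IZR; simpl; lra).
  lia.
Qed.

Lemma cell_close rho a b : 0 < rho -> 0 <= a -> 0 <= b -> cell rho a = cell rho b -> Rabs (a - b) < rho.
Proof.
  intros Hr Ha Hb E. assert (Hinv : 0 < / rho) by (apply Rinv_0_lt_compat; auto).
  unfold cell, Rdiv in E. apply Z2Nat.inj in E; try (apply up_nonneg; apply Rmult_le_pos; lra).
  destruct (archimed (a * / rho)), (archimed (b * / rho)). rewrite E in *.
  replace (a - b) with (rho * (a * / rho - b * / rho)) by (field; lra).
  rewrite Rabs_mult, Rabs_pos_eq by lra.
  assert (Rabs (a * / rho - b * / rho) < 1) by (apply Rabs_def1; lra). nra.
Qed.

(* Classes of [0,1]-valued functions have finite rho-covers for every rho > 0: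
   the key of f is the list of grid cells of its values on the sample. *)
Lemma cover_exists {X} n (F : (X -> R) -> Prop) (S : nat -> X * R) rho c :
  (0 < n)%nat -> 0 < rho -> F c -> (forall f, F f -> forall x, 0 <= f x <= 1) ->
  exists C, is_cover n F rho S C.
Proof.
  intros Hn Hr Hc HF.
  apply (cover_of_finite_keys n F S rho (fun f => map (fun i => cell rho (f (fst (S i)))) (seq 0 n))
           (bounded_lists n (cell rho 1)) c Hc).
  - intros f Hf. apply in_bounded_lists; [rewrite length_map, length_seq; auto|]. intros j Hj. apply in_map_iff in Hj. destruct Hj as [i [<- _]].
    apply cell_le; [exact Hr|now apply HF].
  - intros f g Hf Hg Hkey. apply dS_le_of_pointwise; auto. intros i Hi.
    apply cell_close; try apply HF; auto.
    rewrite map_ext_in_iff in Hkey. apply Hkey, in_seq. lia.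
Qed.

Lemma N2_spec {X} n (F : (X -> R) -> Prop) (S : nat -> X * R) rho c :
  (0 < n)%nat -> 0 < rho -> F c -> (forall f, F f -> forall x, 0 <= f x <= 1) ->
  is_cov_num n F rho S (N2 n F rho S).
Proof.
  intros Hn Hr Hc HF. unfold N2. apply epsilon_spec.
  destruct (cover_exists n F S rho c Hn Hr Hc HF) as [C HC].
  destruct (dec_inh_nat_subset_has_unique_least_element
              (fun k => exists C, is_cover n F rho S C /\ length C = k)) as [m [[[C' HC'] Hmin] _]].
  - intros k. apply classic.
  - exists (length C); eauto.
  - exists m. split; [eauto|]. intros C0 HC0. apply Hmin; eauto.
Qed.

Lemma N2_ge1 {X} n (F : (X -> R) -> Prop) (S : nat -> X * R) rho c :
  (0 < n)%nat -> 0 < rho -> F c -> (forall f, F f -> forall x, 0 <= f x <= 1) ->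
  (1 <= N2 n F rho S)%nat.
Proof.
  intros Hn Hr Hc HF. destruct (N2_spec n F S rho c Hn Hr Hc HF) as [[C [[_ Hcov] Hlen]] _].
  destruct (Hcov c Hc) as [g [Hg _]]. rewrite <- Hlen. destruct C; [inversion Hg|]. simpl; lia.
Qed.

Lemma N2_antitone {X} n (F : (X -> R) -> Prop) (S : nat -> X * R) r1 r2 c :
  (0 < n)%nat -> 0 < r1 -> r1 <= r2 -> F c -> (forall f, F f -> forall x, 0 <= f x <= 1) ->
  (N2 n F r2 S <= N2 n F r1 S)%nat.
Proof.
  intros Hn Hr Hle Hc HF. destruct (N2_spec n F S r1 c Hn Hr Hc HF) as [[C [[Hin Hcov] Hlen]] _].
  destruct (N2_spec n F S r2 c Hn (Rlt_le_trans _ _ _ Hr Hle) Hc HF) as [_ Hmin].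
  rewrite <- Hlen. apply Hmin. split; auto.
  intros f Hf. destruct (Hcov f Hf) as [g [Hg Hd]]. exists g; split; auto; lra.
Qed.

(* ** Dyadic scales and the entropy integral *)

Definition scale (gam : R) (k : nat) : R := gam / 2 ^ k.

Lemma scale_0 gam : scale gam 0 = gam.
Proof. unfold scale. simpl. field. Qed.

Lemma scale_S gam k : scale gam (S k) = scale gam k / 2.
Proof. unfold scale. simpl. field. apply pow_nonzero. lra. Qed.

Lemma scale_pos gam k : 0 < gam -> 0 < scale gam k.
Proof. intros; apply Rdiv_lt_0_compat; auto; apply pow_lt; lra. Qed.

Lemma scale_le gam k : 0 < gam -> scale gam k <= gam.
Proof.
  intros Hg. induction k as [|k IH]; [rewrite scale_0; lra|].
  rewrite scale_S. pose proof (scale_pos gam k Hg). lra.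
Qed.

Lemma le_of_forall_scale E T c : (forall K, E <= T + scale c K) -> E <= T.
Proof.
  intros H. destruct (Rle_dec E T) as [|Hgt]; auto. exfalso.
  set (d := E - T). assert (Hd : 0 < d) by (unfold d; lra).
  set (K := Z.to_nat (up (Rabs c / d))).
  assert (HK : Rabs c / d < INR K).
  { destruct (archimed (Rabs c / d)) as [Hup _].
    assert (0 <= Rabs c / d) by (apply Rdiv_le_0_compat; [apply Rabs_pos|auto]).
    unfold K. rewrite INR_IZR_INZ, Z2Nat.id; auto. apply le_IZR. simpl. lra. }
  assert (HKpow : INR K <= 2 ^ K).
  { clear. induction K as [|K IH]; [simpl; lra|]. rewrite S_INR. simpl.
    assert (1 <= 2 ^ K) by (apply pow_R1_Rle; lra). lra. }
  assert (Hp : 0 < 2 ^ K) by (apply pow_lt; lra).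
  assert (Hsmall : scale c K < d).
  { unfold scale. apply Rle_lt_trans with (Rabs c / 2 ^ K).
    - unfold Rdiv. apply Rmult_le_compat_r; [left; apply Rinv_0_lt_compat; auto|apply Rle_abs].
    - apply Rmult_lt_reg_r with (2 ^ K); auto. unfold Rdiv. rewrite Rmult_assoc, Rinv_l, Rmult_1_r by lra.
      apply Rmult_lt_reg_r with (/ d); [apply Rinv_0_lt_compat; auto|].
      rewrite (Rmult_comm d), Rmult_assoc, Rinv_r, Rmult_1_r by lra. fold (Rabs c / d). lra. }
  specialize (H K). unfold d in Hsmall. lra.
Qed.

Lemma RInt_ge_lower_rectangle (h : R -> R) a b : a <= b -> ex_RInt h a b ->
  (forall x, a < x < b -> h b <= h x) -> (b - a) * h b <= RInt h a b.
Proof.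
  intros Hab Hex Hh.
  assert (Hc : RInt (fun _ => h b) a b <= RInt h a b) by (apply RInt_le; auto; apply ex_RInt_const).
  rewrite RInt_const in Hc. exact Hc.
Qed.

Section EntropyIntegral.

Variables (h : R -> R) (gam : R).
Hypothesis Hgam : 0 < gam.
Hypothesis Hh_pos : forall x, 0 < x -> 0 <= h x.

(* The dyadic Riemann sum of a nonincreasing nonnegative h is bounded by twice its
   integral: scale_{j+1} h(scale_{j+1}) = 2 (scale_{j+1} - scale_{j+2}) h(scale_{j+1}). *)
Lemma dyadic_sum_le_integral :
  (forall e, 0 < e <= gam -> ex_RInt h e gam) -> (forall x y, 0 < x <= y -> h y <= h x) ->
  forall K, rsum K (fun j => scale gam (S j) * h (scale gam (S j))) <= 2 * RInt h (scale gam (S K)) gam.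
Proof.
  intros Hex Hmon K. induction K as [|K IH].
  - simpl rsum. assert (0 <= RInt h (scale gam 1) gam); [|lra].
    pose proof (scale_pos gam 1 Hgam). pose proof (scale_le gam 1 Hgam).
    apply RInt_ge_0; [lra|apply Hex; lra|]. intros x Hx. apply Hh_pos. lra.
  - cbn [rsum]. set (a := scale gam (S (S K))). set (b := scale gam (S K)) in *.
    assert (Ha : 0 < a) by apply scale_pos, Hgam. assert (Hb : a = b / 2) by apply scale_S.
    assert (Hbg : b <= gam) by apply scale_le, Hgam.
    assert (Hex1 : ex_RInt h a gam) by (apply Hex; lra).
    assert (Hex2 : ex_RInt h a b) by (apply (ex_RInt_Chasles_1 h a b gam); auto; lra).
    assert (Hex3 : ex_RInt h b gam) by (apply (ex_RInt_Chasles_2 h a b gam); auto; lra).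
    rewrite <- (RInt_Chasles h a b gam Hex2 Hex3).
    assert (Hrect : (b - a) * h b <= RInt h a b)
      by (apply RInt_ge_lower_rectangle; auto; try lra; intros x Hx; apply Hmon; lra).
    change (plus (RInt h a b) (RInt h b gam)) with (RInt h a b + RInt h b gam).
    assert (b * h b = 2 * ((b - a) * h b)) by (rewrite Hb; field). lra.
Qed.

Variable I : R.
Hypothesis HI : improper_int0 h gam I.

Lemma improper_int0_ex_RInt e : 0 < e <= gam -> ex_RInt h e gam.
Proof.
  intros He. destruct (HI 1 Rlt_0_1) as [d [Hd Hint]].
  set (e' := Rmin (d / 2) e).
  assert (He' : 0 < e' < d) by (unfold e'; split; [apply Rmin_glb_lt; lra|pose proof (Rmin_l (d / 2) e); lra]).
  assert (e' <= e) by apply Rmin_r.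
  destruct (Hint e') as [pr _]; [auto|lra|].
  apply (ex_RInt_Chasles_2 h e' e gam); [lra|]. apply ex_RInt_Reals_1; auto.
Qed.

Lemma improper_int0_partial_le e : 0 < e <= gam -> RInt h e gam <= I.
Proof.
  intros He. destruct (Rle_dec (RInt h e gam) I) as [|Hgt]; auto. exfalso.
  set (d := RInt h e gam - I). assert (Hd0 : 0 < d) by (unfold d; lra).
  destruct (HI d Hd0) as [dl [Hdl Hint]].
  set (e' := Rmin (dl / 2) e).
  assert (He' : 0 < e' < dl) by (unfold e'; split; [apply Rmin_glb_lt; lra|pose proof (Rmin_l (dl / 2) e); lra]).
  assert (e' <= e) by apply Rmin_r.
  destruct (Hint e') as [pr Hpr]; [auto|lra|].
  rewrite <- RInt_Reals in Hpr.
  assert (Hex : ex_RInt h e' e)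
    by (apply (ex_RInt_Chasles_1 h e' e gam); [lra|apply improper_int0_ex_RInt; lra]).
  rewrite <- (RInt_Chasles h e' e gam Hex (improper_int0_ex_RInt e He)) in Hpr.
  change (plus (RInt h e' e) (RInt h e gam)) with (RInt h e' e + RInt h e gam) in Hpr.
  assert (0 <= RInt h e' e) by (apply RInt_ge_0; auto; intros x Hx; apply Hh_pos; lra).
  apply Rabs_def2 in Hpr. unfold d in *. lra.
Qed.

Lemma dyadic_sum_le_improper :
  (forall x y, 0 < x <= y -> h y <= h x) ->
  forall K, rsum K (fun j => scale gam (S j) * h (scale gam (S j))) <= 2 * I.
Proof.
  intros Hmon K. eapply Rle_trans; [apply dyadic_sum_le_integral; auto; apply improper_int0_ex_RInt|].
  pose proof (scale_pos gam (S K) Hgam). pose proof (scale_le gam (S K) Hgam).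
  pose proof (improper_int0_partial_le (scale gam (S K))). lra.
Qed.

End EntropyIntegral.

Lemma sq_loss_diff_sq u v y : 0 <= u <= 1 -> 0 <= v <= 1 -> 0 <= y <= 1 ->
  ((u - y) ^ 2 - (v - y) ^ 2) ^ 2 <= 4 * (u - v) ^ 2.
Proof.
  intros Hu Hv Hy.
  replace (((u - y) ^ 2 - (v - y) ^ 2) ^ 2) with ((u - v) ^ 2 * (u + v - 2 * y) ^ 2) by ring.
  assert ((u + v - 2 * y) ^ 2 <= 4) by nra. pose proof (pow2_ge_0 (u - v)). nra.
Qed.

Definition loss_vec {X} (Sm : nat -> X * R) (f : X -> R) (i : nat) : R :=
  (f (fst (Sm i)) - snd (Sm i)) ^ 2.

Definition rad_avg (n : nat) (s v : nat -> R) : R := / INR n * rsum n (fun i => s i * v i).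

Lemma rad_avg_sub n s a b :
  rad_avg n s a - rad_avg n s b = rsum n (fun i => s i * ((a i - b i) / INR n)).
Proof.
  unfold rad_avg. rewrite (rsum_ext n (fun i => s i * ((a i - b i) / INR n))
     (fun i => / INR n * (s i * a i) + (-1) * (/ INR n * (s i * b i)))) by (intros; unfold Rdiv; ring).
  rewrite rsum_plus, !rsum_scal. ring.
Qed.

Lemma Rsup_le (E : R -> Prop) B : (exists v, E v) -> (forall v, E v -> v <= B) -> Rsup E <= B.
Proof.
  intros Hne Hub. assert (Hlub : is_lub E (Rsup E)).
  { unfold Rsup. apply epsilon_spec. destruct (completeness E) as [m Hm]; [exists B; exact Hub|auto|].
    exists m; exact Hm. }
  apply Hlub. exact Hub.
Qed.

Lemma emp_rad_le {X} n (G : (X * R -> R) -> Prop) (Sm : nat -> X * R) (B : (nat -> R) -> R) g0 :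
  G g0 -> (forall s g, signs n s -> G g -> / INR n * rsum n (fun i => s i * g (Sm i)) <= B s) ->
  emp_rad n G Sm <= Esign n B.
Proof.
  intros Hg0 HB. apply Esign_mono. intros s Hs. apply Rsup_le.
  - eexists; exists g0; split; eauto.
  - intros v [g [Hg ->]]. apply HB; auto.
Qed.

(* ** Chaining *)

Section Chaining.

Variables (X : Type) (n : nat) (F : (X -> R) -> Prop) (Sm : nat -> X * R) (c : X -> R) (gam : R).
Hypothesis Hn : (0 < n)%nat.
Hypothesis HF : forall f, F f -> forall x, 0 <= f x <= 1.
Hypothesis HS : sample_ok n Sm.
Hypothesis Hc : F c.
Hypothesis Hgam : 0 < gam.

Lemma increment_sq_bound a b r : F a -> F b -> dS n Sm a b <= r ->
  rsum n (fun i => ((loss_vec Sm a i - loss_vec Sm b i) / INR n) ^ 2) <= 4 * r ^ 2 / INR n.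
Proof.
  intros Ha Hb Hd. assert (HnR : 0 < INR n) by (apply lt_0_INR; auto).
  rewrite (rsum_ext n _ (fun i => (/ INR n) ^ 2 * (loss_vec Sm a i - loss_vec Sm b i) ^ 2))
    by (intros; unfold Rdiv; ring).
  rewrite rsum_scal.
  assert (Hlip : rsum n (fun i => (loss_vec Sm a i - loss_vec Sm b i) ^ 2)
                 <= 4 * rsum n (fun i => (a (fst (Sm i)) - b (fst (Sm i))) ^ 2)).
  { rewrite <- rsum_scal. apply rsum_le. intros i Hi. apply sq_loss_diff_sq; auto. }
  pose proof (dS_le_sum_sq n Sm a b r Hn Hd).
  assert (0 < (/ INR n) ^ 2) by (apply pow_lt, Rinv_0_lt_compat; auto).
  apply Rle_trans with ((/ INR n) ^ 2 * (4 * (INR n * r ^ 2))); [apply Rmult_le_compat_l; lra|].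
  right. field. lra.
Qed.

(* Replacing a member of F by an r-close one changes its Rademacher average by
   at most 2r (Cauchy-Schwarz with |s|^2 = n). *)
Lemma rad_avg_loss_close s a b r : signs n s -> F a -> F b -> dS n Sm a b <= r ->
  rad_avg n s (loss_vec Sm a) - rad_avg n s (loss_vec Sm b) <= 2 * r.
Proof.
  intros Hs Ha Hb Hd. assert (HnR : 0 < INR n) by (apply lt_0_INR; auto).
  assert (Hr : 0 <= r) by (pose proof (sqrt_pos (/ INR n * rsum n (fun i => (a (fst (Sm i)) - b (fst (Sm i))) ^ 2))); unfold dS in Hd; lra).
  rewrite rad_avg_sub. eapply Rle_trans; [apply rsum_cauchy_schwarz|].
  assert (Hsn : rsum n (fun i => s i ^ 2) <= INR n).
  { rewrite <- (Rmult_1_r (INR n)), <- rsum_const. apply rsum_le. intros i Hi.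
    destruct (Hs i Hi) as [-> | ->]; lra. }
  pose proof (increment_sq_bound a b r Ha Hb Hd).
  rewrite <- sqrt_mult_alt by apply rsum_sq_nonneg.
  rewrite <- (sqrt_square (2 * r)) by lra. apply sqrt_le_1_alt.
  apply Rle_trans with (INR n * (4 * r ^ 2 / INR n)); [apply Rmult_le_compat; auto using rsum_sq_nonneg|].
  right. field. lra.
Qed.

Definition level_cover (k : nat) : list (X -> R) :=
  match k with
  | O => c :: nil
  | S _ => epsilon (inhabits nil) (fun C => is_cover n F (scale gam k) Sm C /\
                                            length C = N2 n F (scale gam k) Sm)
  end.

Lemma level_cover_minimal k : (0 < k)%nat ->
  is_cover n F (scale gam k) Sm (level_cover k) /\ length (level_cover k) = N2 n F (scale gam k) Sm.
Proof.
  intros Hk. destruct k as [|k]; [lia|]. unfold level_cover. apply epsilon_spec.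
  destruct (N2_spec n F Sm (scale gam (S k)) c Hn (scale_pos gam _ Hgam) Hc HF) as [[C HC] _]. eauto.
Qed.

Lemma level_cover_in k g : In g (level_cover k) -> F g.
Proof.
  destruct k as [|k]; simpl level_cover.
  - intros [<-|[]]; auto.
  - intros Hg. apply (proj1 (proj1 (level_cover_minimal (S k) ltac:(lia)))), Hg.
Qed.

Lemma level_cover_close k f : F f -> dS n Sm f c <= gam ->
  exists g, In g (level_cover k) /\ dS n Sm f g <= scale gam k.
Proof.
  intros Hf Hfc. destruct k as [|k].
  - exists c. rewrite scale_0. simpl. auto.
  - apply (proj2 (proj1 (level_cover_minimal (S k) ltac:(lia)))), Hf.
Qed.

Lemma level_cover_length k : (1 <= length (level_cover k) <= N2 n F (scale gam k) Sm)%nat.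
Proof.
  pose proof (N2_ge1 n F Sm (scale gam k) c Hn (scale_pos gam k Hgam) Hc HF).
  destruct k as [|k]; [simpl; lia|]. rewrite (proj2 (level_cover_minimal (S k) ltac:(lia))). lia.
Qed.

(* Links of a
   chain are 3 gam/2^k-close; other pairs contribute the zero vector, which keeps
   the squared norms of all increments small. *)
Definition increment (k : nat) (a b : X -> R) : nat -> R :=
  if Rle_dec (dS n Sm a b) (3 * scale gam k)
  then fun i => (loss_vec Sm a i - loss_vec Sm b i) / INR n
  else fun _ => 0.

Definition increments (k : nat) : list (nat -> R) :=
  map (fun p => increment k (fst p) (snd p)) (list_prod (level_cover k) (level_cover (pred k))).

Definition max_increment (k : nat) (s : nat -> R) : R :=
  lmax (map (fun w => rsum n (fun i => s i * w i)) (increments k)).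

Lemma chain s f : F f -> dS n Sm f c <= gam -> forall K, exists g,
  In g (level_cover K) /\ dS n Sm f g <= scale gam K /\
  rad_avg n s (loss_vec Sm g) <= rad_avg n s (loss_vec Sm c) + rsum K (fun j => max_increment (S j) s).
Proof.
  intros Hf Hfc K. induction K as [|K IH].
  - exists c. rewrite scale_0. cbn [rsum level_cover In]. repeat split; auto. lra.
  - destruct IH as [g [Hg [Hfg Hsum]]].
    destruct (level_cover_close (S K) f Hf Hfc) as [g' [Hg' Hfg']].
    exists g'. split; [|split]; auto. cbn [rsum].
    assert (Hd : dS n Sm g' g <= 3 * scale gam (S K)).
    { eapply Rle_trans; [apply (dS_triangle n Sm g' f g Hn)|]. rewrite (dS_sym n Sm g' f), scale_S in *. lra. }
    assert (Hle : rsum n (fun i => s i * increment (S K) g' g i) <= max_increment (S K) s).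
    { apply lmax_ge, (in_map (fun w => rsum n (fun i => s i * w i))).
      apply (in_map (fun p => increment (S K) (fst p) (snd p)) _ (g', g)), in_prod; auto. }
    unfold increment in Hle. destruct (Rle_dec _ _) as [_|]; [|lra].
    rewrite <- rad_avg_sub in Hle. lra.
Qed.

Lemma increments_length j :
  (1 <= length (increments (S j)) <= N2 n F (scale gam (S j)) Sm * N2 n F (scale gam (S j)) Sm)%nat.
Proof.
  unfold increments. rewrite length_map, length_prod. simpl pred.
  pose proof (level_cover_length (S j)). pose proof (level_cover_length j).
  assert (N2 n F (scale gam j) Sm <= N2 n F (scale gam (S j)) Sm)%nat.
  { apply (N2_antitone n F Sm _ _ c Hn (scale_pos gam _ Hgam)); auto.
    rewrite scale_S. pose proof (scale_pos gam j Hgam). lra. }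
  nia.
Qed.

Lemma increments_sq_bound j w : In w (increments (S j)) ->
  rsum n (fun i => w i ^ 2) <= 4 * (3 * scale gam (S j)) ^ 2 / INR n.
Proof.
  intros Hw. apply in_map_iff in Hw. destruct Hw as [[a b] [<- Hab]].
  apply in_prod_iff in Hab. destruct Hab as [Ha Hb]. cbn [fst snd pred] in *.
  unfold increment. destruct (Rle_dec _ _) as [Hd|].
  - apply increment_sq_bound; auto; eapply level_cover_in; eauto.
  - rewrite (rsum_ext n _ (fun _ => 0)) by (intros; ring). rewrite rsum_const, Rmult_0_r.
    apply Rmult_le_pos; [pose proof (pow2_ge_0 (3 * scale gam (S j))); lra|].
    left. apply Rinv_0_lt_compat, lt_0_INR; auto.
Qed.

(* Massart's lemma at level j+1: at most N^2 increments of squared norm at most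
   4 (3 r)^2 / n, with r = gam/2^(j+1), give E max <= 12 r sqrt(ln N) / sqrt n. *)
Lemma level_bound j : Esign n (max_increment (S j)) <=
  12 / sqrt (INR n) * (scale gam (S j) * sqrt (ln (INR (N2 n F (scale gam (S j)) Sm)))).
Proof.
  set (r := scale gam (S j)). set (N := INR (N2 n F r Sm)).
  assert (HnR : 0 < INR n) by (apply lt_0_INR; auto).
  assert (Hr : 0 < r) by apply scale_pos, Hgam.
  destruct (increments_length j) as [Hlen1 HlenN]. fold r in HlenN.
  assert (HN : 1 <= N) by (apply (le_INR 1); lia).
  assert (HlnN : 0 <= ln N) by (rewrite <- ln_1; apply ln_le; lra).
  set (Q := 4 * (3 * r) ^ 2 / INR n).
  eapply Rle_trans; [apply (massart n (increments (S j)) Q)|].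
  - intros E. rewrite E in Hlen1. simpl in Hlen1. lia.
  - unfold Q. apply Rmult_le_pos; [pose proof (pow2_ge_0 (3 * r)); lra|left; apply Rinv_0_lt_compat; auto].
  - apply increments_sq_bound.
  - assert (Hln : ln (INR (length (increments (S j)))) <= 2 * ln N).
    { replace (2 * ln N) with (ln (N * N)) by (rewrite ln_mult; lra).
      apply ln_le; [apply (lt_INR 0); lia|]. unfold N. rewrite <- mult_INR. apply le_INR; auto. }
    apply Rle_trans with (sqrt ((12 * r) ^ 2 * ln N / INR n)).
    + apply sqrt_le_1_alt. unfold Q.
      replace ((12 * r) ^ 2 * ln N / INR n) with (2 * (4 * (3 * r) ^ 2 / INR n) * (2 * ln N)) by (field; lra).
      apply Rmult_le_compat_l; [|lra].
      apply Rmult_le_pos; [lra|]. apply Rmult_le_pos; [pose proof (pow2_ge_0 (3 * r)); lra|].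
      left; apply Rinv_0_lt_compat; auto.
    + assert (Hsn : 0 < sqrt (INR n)) by (apply sqrt_lt_R0; auto).
      rewrite sqrt_div, sqrt_mult_alt, sqrt_pow2 by (try apply pow2_ge_0; try apply Rmult_le_pos; try apply pow2_ge_0; lra).
      right. field. lra.
Qed.

Lemma chaining_bound K :
  emp_rad n (loss_class (fun f => F f /\ dS n Sm f c <= gam)) Sm <=
  12 / sqrt (INR n) * rsum K (fun j => scale gam (S j) * sqrt (ln (INR (N2 n F (scale gam (S j)) Sm))))
  + 2 * scale gam K.
Proof.
  eapply Rle_trans.
  - apply (emp_rad_le n _ Sm (fun s => rad_avg n s (loss_vec Sm c)
             + rsum K (fun j => max_increment (S j) s) + 2 * scale gam K) (fun z => (c (fst z) - snd z) ^ 2)).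
    + exists c. repeat split; auto. rewrite dS_refl. lra.
    + intros s g Hs [f [[Hf Hfc] ->]].
      destruct (chain s f Hf Hfc K) as [g [Hg [Hfg Hsum]]].
      pose proof (rad_avg_loss_close s f g _ Hs Hf (level_cover_in K g Hg) Hfg).
      change (/ INR n * rsum n (fun i => s i * (f (fst (Sm i)) - snd (Sm i)) ^ 2))
        with (rad_avg n s (loss_vec Sm f)). lra.
  - rewrite !Esign_plus, Esign_const. unfold rad_avg. rewrite Esign_scal, Esign_linear, Rmult_0_r.
    rewrite (Esign_rsum n K (fun j s => max_increment (S j) s)), <- rsum_scal.
    apply Rplus_le_compat_r. rewrite Rplus_0_l. apply rsum_le. intros j _. apply level_bound.
Qed.

End Chaining.

(* Finer scales need more balls, so the entropy sqrt(ln N_2(F, rho, S)) is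
   nonincreasing in rho. *)
Lemma entropy_antitone {X} n (F : (X -> R) -> Prop) (Sm : nat -> X * R) c :
  (0 < n)%nat -> F c -> (forall f, F f -> forall x, 0 <= f x <= 1) ->
  forall x y, 0 < x <= y -> sqrt (ln (INR (N2 n F y Sm))) <= sqrt (ln (INR (N2 n F x Sm))).
Proof.
  intros Hn Hc HF x y Hxy. apply sqrt_le_1_alt.
  pose proof (N2_ge1 n F Sm y c Hn ltac:(lra) Hc HF).
  pose proof (N2_antitone n F Sm x y c Hn ltac:(lra) ltac:(lra) Hc HF).
  apply ln_le; [apply lt_0_INR; lia|apply le_INR; auto].
Qed.

Theorem dudley_loss_ball {X} n (F : (X -> R) -> Prop) (Sm : nat -> X * R) c gam I :
  (0 < n)%nat -> (forall f, F f -> forall x, 0 <= f x <= 1) -> sample_ok n Sm -> F c -> 0 < gam ->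
  improper_int0 (fun rho => sqrt (ln (INR (N2 n F rho Sm)))) gam I ->
  emp_rad n (loss_class (fun f => F f /\ dS n Sm f c <= gam)) Sm <= 24 / sqrt (INR n) * I.
Proof.
  intros Hn HF HS Hc Hgam HI.
  set (h := fun rho => sqrt (ln (INR (N2 n F rho Sm)))) in *.
  assert (Hh : forall x, 0 < x -> 0 <= h x) by (intros; apply sqrt_pos).
  assert (Hsn : 0 < / sqrt (INR n)) by (apply Rinv_0_lt_compat, sqrt_lt_R0, lt_0_INR; auto).
  apply (le_of_forall_scale _ _ (2 * gam)). intros K.
  eapply Rle_trans; [apply (chaining_bound X n F Sm c gam Hn HF HS Hc Hgam K)|].
  pose proof (dyadic_sum_le_improper h gam Hgam Hh I HI (entropy_antitone n F Sm c Hn Hc HF) K) as Hsum.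
  replace (2 * scale gam K) with (scale (2 * gam) K) by (unfold scale; field; apply pow_nonzero; lra).
  unfold Rdiv. rewrite !(Rmult_comm _ (/ sqrt (INR n))), !Rmult_assoc.
  apply Rplus_le_compat_r, Rmult_le_compat_l; [lra|]. unfold h in Hsum. lra.
Qed.

Theorem lemma6 (X : Type) (n : nat) (F : (X -> R) -> Prop)
  (Hn : (0 < n)%nat)
  (HF : forall f, F f -> forall x, 0 <= f x <= 1)
  (rstar : R) (Hr : is_loc_radius n (sqdiff_class F) rstar)
  (S' : nat -> X * R) (HS : sample_ok n S')
  (c : X -> R) (Hc : F c)
  (gam : R) (Hgam0 : 0 < gam) (Hgam : sqrt rstar <= gam)
  (I : R)
  (HI : improper_int0 (fun rho => sqrt (ln (INR (N2 n F rho S')))) gam I) :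
  emp_rad n (loss_class (fun f => F f /\ dS n S' f c <= gam)) S'
    <= gam * sqrt rstar + 24 / sqrt (INR n) * I.
Proof.
  pose proof (dudley_loss_ball n F S' c gam I Hn HF HS Hc Hgam0 HI).
  assert (0 <= gam * sqrt rstar) by (apply Rmult_le_pos; [lra|apply sqrt_pos]).
  lra.
Qed.
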